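(* In the algorithm GBGC, equip $G$ with the relation: $(\mathbf u',f')<(\mathbf u,f)$ iff, with $L=\mathrm{lcm}(\mathrm{lpp}(\mathbf u),\mathrm{lpp}(\mathbf u'))$, $t'=L/\mathrm{lpp}(\mathbf u')$, $t=L/\mathrm{lpp}(\mathbf u)$, either $\mathrm{lpp}(t'f')\prec\mathrm{lpp}(tf)$, or $\mathrm{lpp}(t'f')=\mathrm{lpp}(tf)$ and $(\mathbf u',f')$ was added to $G$ later than $(\mathbf u,f)$. Then: (i) whenever a selected critical pair $[t_f(\mathbf u,f),t_g(\mathbf v,g)]$ is regular and not gen-rewritable by $G$ and its S-polynomial reduces to $(\mathbf w,h)$, one has $(\mathbf w,h)<(\mathbf u,f)$ (admissibility); (ii) if $(\mathbf u,f)\in G$, $f\ne 0$, $t$ a power product, and $t(\mathbf u,f)$ is reducible by $G$ and reduces to $(\mathbf w,h)$ for which there is $(\mathbf u',f')\in G$ with $\mathrm{lpp}(\mathbf u')\mid\mathrm{lpp}(\mathbf w)$, $\mathrm{lpp}(f')\mid\mathrm{lpp}(h)$, $\mathrm{lpp}(\mathbf w)/\mathrm{lpp}(\mathbf u')=\mathrm{lpp}(h)/\mathrm{lpp}(f')$ and $\mathrm{lc}(\mathbf w)/\mathrm{lc}(\mathbf u')=\mathrm{lc}(h)/\mathrm{lc}(f')$ (eventually super top-reducible), then $t(\mathbf u,f)$ is gen-rewritable by $G$ with respect to this relation.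
   Context: Setting: $R=K[x_1,\dots,x_n]$, $f_1,\dots,f_m\in R$, $\mathbf M=\{(\mathbf u,f)\in R^m\times R:\mathbf u\cdot(f_1,\dots,f_m)=f\}$, $\mathbf e_i$ unit vectors, arbitrary term orders $\prec$ on $R$ and on $R^m$, $\mathrm{lpp}$/$\mathrm{lc}$ leading power product (term)/coefficient, $\mathrm{lpp}(0)=0$ below all nonzero terms. Critical pair $[t_f(\mathbf u,f),t_g(\mathbf v,g)]$ of $(\mathbf u,f),(\mathbf v,g)$ ($f,g\ne0$): $t_f=\mathrm{lcm}(\mathrm{lpp}(f),\mathrm{lpp}(g))/\mathrm{lpp}(f)$, $t_g$ likewise, with $\mathrm{lpp}(t_f\mathbf u)\succeq\mathrm{lpp}(t_g\mathbf v)$; S-polynomial $t_f(\mathbf u,f)-c\,t_g(\mathbf v,g)$, $c=\mathrm{lc}(f)/\mathrm{lc}(g)$; regular if $\mathrm{lpp}(t_f\mathbf u)\succ\mathrm{lpp}(t_g\mathbf v)$. Gen-rewritable: $t(\mathbf u,f)$ ($(\mathbf u,f)\in B$, $f\ne0$) is gen-rewritable by $B$ if some $(\mathbf u',f')\in B$ has $\mathrm{lpp}(\mathbf u')\mid\mathrm{lpp}(t\mathbf u)$ and $(\mathbf u',f')<(\mathbf u,f)$; a critical pair is gen-rewritable if either component is. Reducibility/reduction of $(\mathbf u,f)$ by $B$: a one-step reduction replaces it by $(\mathbf u-ct\mathbf v,f-ctg)$ for some $(\mathbf v,g)\in B$, $g\ne0$, $\mathrm{lpp}(g)\mid\mathrm{lpp}(f)$,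 $c=\mathrm{lc}(f)/\mathrm{lc}(g)$, $t=\mathrm{lpp}(f)/\mathrm{lpp}(g)$, provided $\mathrm{lpp}(\mathbf u-ct\mathbf v)=\mathrm{lpp}(\mathbf u)$; reducing means repeating until no step applies. Algorithm GBGC: start with $G=\{(\mathbf e_i,f_i)\}$, CPairs = all critical pairs of these, then add $(f_j\mathbf e_i-f_i\mathbf e_j,0)$ ($i<j$) to $G$; while CPairs nonempty, remove any pair; if it is regular and not gen-rewritable by $G$, reduce its S-polynomial by $G$ to $(\mathbf w,h)$; if $h\ne0$, add critical pairs of $(\mathbf w,h)$ with all $(\mathbf w',h')\in G$, $h'\ne0$, to CPairs and add $(h\mathbf e_i-f_i\mathbf w,0)$, $i=1..m$, to $G$; add $(\mathbf w,h)$ to $G$. *)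

From HB Require Import structures.
From mathcomp Require Import all_boot all_order all_algebra.
From Stdlib Require Import ClassicalEpsilon Permutation.
Set Implicit Arguments. Unset Strict Implicit. Unset Printing Implicit Defensive.
Import GRing.Theory.
Local Open Scope ring_scope.

Definition decP (P : Prop) : bool :=
  if excluded_middle_informative P then true else false.

Section Monomials.
Variable n : nat.
Definition mon := {ffun 'I_n -> nat}.
Definition mone : mon := [ffun _ => 0%N].
Definition mmul (a b : mon) : mon := [ffun i => (a i + b i)%N].
Definition mdvd (a b : mon) : bool := [forall i, (a i <= b i)%N].
(* mquo b a = b / a (meaningful when a | b) *)
Definition mquo (b a : mon) : mon := [ffun i => (b i - a i)%N].
Definition mlcm (a b : mon) : mon := [ffun i => maxn (a i) (b i)].
Definition divs (a : mon) : seq mon :=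
  let B := (\max_(i < n) a i).+1 in
  filter (fun d => mdvd d a)
    (map (fun g : {ffun 'I_n -> 'I_B} => ([ffun i => nat_of_ord (g i)] : mon))
         (enum {ffun 'I_n -> 'I_B})).
End Monomials.

Definition strict_total (T : eqType) (lt : rel T) : Prop :=
  [/\ irreflexive lt, transitive lt & forall a b, a != b -> lt a b || lt b a].

Definition term_order (n : nat) (lt : rel (mon n)) : Prop :=
  [/\ strict_total lt,
      (forall a b t, lt a b -> lt (mmul t a) (mmul t b))
    & (forall a, a != mone n -> lt (mone n) a)].

(* module terms t e_i, represented as (i, t) *)
Definition tmul (n m : nat) (t : mon n) (x : 'I_m * mon n) : 'I_m * mon n :=
  (x.1, mmul t x.2).
Definition tdvd (n m : nat) (x y : 'I_m * mon n) : bool :=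
  (x.1 == y.1) && mdvd x.2 y.2.

Definition mod_term_order (n m : nat) (lt : rel ('I_m * mon n)) : Prop :=
  [/\ strict_total lt,
      (forall x y t, lt x y -> lt (tmul t x) (tmul t y))
    & (forall x t, t != mone n -> lt x (tmul t x))].

(* leading term of a coefficient function c w.r.t. lt; None for zero
   (lpp(0) = 0, below all nonzero terms) *)
Definition is_lead (K : fieldType) (T : eqType) (lt : rel T) (c : T -> K) (a : T) :=
  c a != 0 /\ forall b, c b != 0 -> b != a -> lt b a.

Definition lead (K : fieldType) (T : eqType) (lt : rel T) (c : T -> K) : option T :=
  match excluded_middle_informative (exists a, is_lead lt c a) with
  | left H => Some (proj1_sig (constructive_indefinite_description _ H))
  | right _ => None
  end.

Definition olt (T : Type) (lt : rel T) (a b : option T) : bool :=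
  match a, b with
  | None, Some _ => true
  | Some x, Some y => lt x y
  | _, _ => false
  end.

Definition odvd (n m : nat) (a b : option ('I_m * mon n)) : bool :=
  match a, b with Some x, Some y => tdvd x y | _, _ => false end.

Section GBGC.
Variables (K : fieldType) (n m : nat).
Variables (lt : rel (mon n)) (ltM : rel ('I_m * mon n)).
Variable F : 'I_m -> (mon n -> K).

Definition mpoly := mon n -> K.
Definition mvec := 'I_m -> mpoly.
Definition elt := (mvec * mpoly)%type.

Definition pzero : mpoly := fun _ => 0.
Definition pone : mpoly := fun a => if a == mone n then 1 else 0.
Definition pnz (p : mpoly) : bool := decP (exists a, p a != 0).
Definition finsupp (p : mpoly) : Prop :=
  exists s : seq (mon n), forall a, p a != 0 -> a \in s.
Definition psub (p q : mpoly) : mpoly := fun a => p a - q a.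
Definition pmulm (c : K) (t : mon n) (p : mpoly) : mpoly :=
  fun a => if mdvd t a then c * p (mquo a t) else 0.
Definition pmul (p q : mpoly) : mpoly :=
  fun a => \sum_(d <- divs a) p d * q (mquo a d).

Definition vsub (u v : mvec) : mvec := fun i => psub (u i) (v i).
Definition vmulm (c : K) (t : mon n) (u : mvec) : mvec :=
  fun i => pmulm c t (u i).
Definition vmulp (p : mpoly) (u : mvec) : mvec := fun i => pmul p (u i).
Definition vsingle (i : 'I_m) (p : mpoly) : mvec :=
  fun k => if k == i then p else pzero.
Definition unitv (i : 'I_m) : mvec := vsingle i pone.

Definition lpp (p : mpoly) : option (mon n) := lead lt p.
Definition lc (p : mpoly) : K :=
  match lpp p with Some a => p a | None => 0 end.
Definition vlpp (u : mvec) : option ('I_m * mon n) :=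
  lead ltM (fun x => u x.1 x.2).
Definition vlc (u : mvec) : K :=
  match vlpp u with Some x => u x.1 x.2 | None => 0 end.

Definition lppd (p : mpoly) : mon n := odflt (mone n) (lpp p).

Definition zelt : elt := (fun _ => pzero, pzero).
Definition Gat (G : seq elt) (j : nat) : elt := nth zelt G j.

(* The relation of the theorem, on positions in G (G is listed in order of
   insertion, so a larger position means "added later"): G_j < G_k. *)
Definition gbrel (G : seq elt) (j k : nat) : Prop :=
  match vlpp (Gat G j).1, vlpp (Gat G k).1 with
  | Some x', Some x =>
      let L := mlcm x.2 x'.2 in
      let t' := mquo L x'.2 in
      let t := mquo L x.2 in
      let a' := lpp (pmulm 1 t' (Gat G j).2) in
      let a := lpp (pmulm 1 t (Gat G k).2) in
      olt lt a' a \/ (a' = a /\ (k < j)%N)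
  | _, _ => False
  end.

Definition genrew (G : seq elt) (t : mon n) (k : nat) : Prop :=
  (k < size G)%N /\
  exists j, [/\ (j < size G)%N,
    odvd (vlpp (Gat G j).1) (vlpp (vmulm 1 t (Gat G k).1)) & gbrel G j k].

(* critical pairs: (k, l) stands for [t_f G_k, t_g G_l] *)
Definition cpt (G : seq elt) (k l : nat) : mon n :=
  mquo (mlcm (lppd (Gat G k).2) (lppd (Gat G l).2)) (lppd (Gat G k).2).
Definition cpsig (G : seq elt) (k l : nat) : option ('I_m * mon n) :=
  vlpp (vmulm 1 (cpt G k l) (Gat G k).1).
(* orient so that lpp(t_f u) >= lpp(t_g v) *)
Definition make_cp (G : seq elt) (k l : nat) : nat * nat :=
  if olt ltM (cpsig G k l) (cpsig G l k) then (l, k) else (k, l).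
Definition cp_regular (G : seq elt) (k l : nat) : bool :=
  olt ltM (cpsig G l k) (cpsig G k l).
Definition cp_genrew (G : seq elt) (k l : nat) : Prop :=
  genrew G (cpt G k l) k \/ genrew G (cpt G l k) l.
Definition spoly (G : seq elt) (k l : nat) : elt :=
  let c := lc (Gat G k).2 / lc (Gat G l).2 in
  (vsub (vmulm 1 (cpt G k l) (Gat G k).1) (vmulm c (cpt G l k) (Gat G l).1),
   psub (pmulm 1 (cpt G k l) (Gat G k).2) (pmulm c (cpt G l k) (Gat G l).2)).

Definition redstep (B : seq elt) (x y : elt) : Prop :=
  exists j a b, [/\ (j < size B)%N, pnz (Gat B j).2,
    lpp x.2 = Some a, lpp (Gat B j).2 = Some b & mdvd b a] /\
    let c := lc x.2 / lc (Gat B j).2 in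
    let t := mquo a b in
    let u' := vsub x.1 (vmulm c t (Gat B j).1) in
    vlpp u' = vlpp x.1 /\ y = (u', psub x.2 (pmulm c t (Gat B j).2)).

Inductive reduces (B : seq elt) : elt -> elt -> Prop :=
| red_done x : (forall z, ~ redstep B x z) -> reduces B x x
| red_more x y z : redstep B x y -> reduces B y z -> reduces B x z.

Definition init_syz : seq elt :=
  map (fun p : 'I_m * 'I_m => (vsub (vsingle p.1 (F p.2)) (vsingle p.2 (F p.1)), pzero))
    (filter (fun p : 'I_m * 'I_m => (p.1 < p.2)%N)
       [seq (i, j) | i <- enum 'I_m, j <- enum 'I_m]).
Definition new_syz (w : mvec) (h : mpoly) : seq elt :=
  [seq (vsub (vsingle i h) (vmulp (F i) w), pzero) | i <- enum 'I_m].

Definition init_basis : seq elt := [seq (unitv i, F i) | i <- enum 'I_m].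
Definition init_cps : seq (nat * nat) :=
  [seq make_cp init_basis p.1 p.2
  | p <- [seq (i, j) | i <- iota 0 m, j <- iota 0 m]
  & [&& (p.1 < p.2)%N, pnz (Gat init_basis p.1).2 & pnz (Gat init_basis p.2).2]].

Definition rem_at (T : Type) (p : nat) (s : seq T) := take p s ++ drop p.+1 s.

(* states (G, CPairs) reachable by GBGC; the (unspecified) order in which
   the syzygies of one batch are added is arbitrary *)
Inductive reachable : seq elt -> seq (nat * nat) -> Prop :=
| reach_init s : Permutation s init_syz -> reachable (init_basis ++ s) init_cps
| reach_skip G CP p :
    reachable G CP -> (p < size CP)%N ->
    let kl := nth (0%N, 0%N) CP p in
    ~ (cp_regular G kl.1 kl.2 /\ ~ cp_genrew G kl.1 kl.2) ->
    reachable G (rem_at p CP)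
| reach_zero G CP p w h :
    reachable G CP -> (p < size CP)%N ->
    let kl := nth (0%N, 0%N) CP p in
    cp_regular G kl.1 kl.2 -> ~ cp_genrew G kl.1 kl.2 ->
    reduces G (spoly G kl.1 kl.2) (w, h) -> ~~ pnz h ->
    reachable (G ++ [:: (w, h)]) (rem_at p CP)
| reach_new G CP p w h s :
    reachable G CP -> (p < size CP)%N ->
    let kl := nth (0%N, 0%N) CP p in
    cp_regular G kl.1 kl.2 -> ~ cp_genrew G kl.1 kl.2 ->
    reduces G (spoly G kl.1 kl.2) (w, h) -> pnz h ->
    Permutation s (new_syz w h) ->
    let G' := G ++ s ++ [:: (w, h)] in
    reachable G'
      (rem_at p CP ++ [seq make_cp G' (size G' - 1) j
                      | j <- iota 0 (size G) & pnz (Gat G j).2]).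

End GBGC.

From mathcomp Require Import all_boot all_order all_algebra.
From Stdlib Require Import Permutation ClassicalEpsilon.
From mathcomp Require Import zify.
Set Implicit Arguments. Unset Strict Implicit. Unset Printing Implicit Defensive.
Import GRing.Theory.
Local Open Scope ring_scope.

(* Two facts about leads of differences carry
   the argument: subtracting something strictly smaller keeps the lead
   ([lead_sub_lower]), subtracting something with the same lead and the same
   leading coefficient lowers it ([lead_sub_cancel]).  Multiplying by a power
   product t shifts leads by t ([lpp_pmulm], [vlpp_vmulm]).

   (i) For a regular critical pair [t_f(u,f), t_g(v,g)] the signature of the
   S-polynomial is lpp(t_f u) ([spoly_signature]) and its polynomial lead is
   at most lpp(t_f f) ([spoly_lpp]); a reduction keeps the signature and does
   not raise the polynomial lead ([reduces_vlpp], [reduces_lpp]).  So the new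
   element (w,h) has signature t_f lpp(u), hence cofactors 1 and t_f in the
   relation, and lpp(h) <= lpp(t_f f); in case of equality (w,h) wins because
   it was added later ([admissible]).  [spoly_signature] needs the signature
   side to be finitely supported, an invariant of GBGC ([fin_reachable]).

   (ii) A reduction performing at least one step strictly lowers the
   polynomial lead ([reduces_strict]); cancelling a common power product in
   the divisibility data of the super top-reduction turns lpp(h) < lpp(t f)
   into the comparison demanded by the relation ([super_top_genrew]). *)

Definition fsup (K : fieldType) (T : eqType) (c : T -> K) : Prop :=
  exists s : seq T, forall a, c a != 0 -> a \in s.

Definition ole (T : Type) (lt : rel T) (a b : option T) : Prop :=
  a = b \/ olt lt a b.

Section LeadingTerms.
Variables (K : fieldType) (T : eqType) (lt : rel T).
Hypothesis lt_order : strict_total lt.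
Implicit Types (c : T -> K) (a b x y : T).

Lemma lt_irr x : lt x x = false.
Proof. by case: lt_order => irr _ _; apply: irr. Qed.

Lemma lt_trans x y z : lt x y -> lt y z -> lt x z.
Proof. by case: lt_order => _ tr _ hxy hyz; apply: (tr y). Qed.

Lemma lt_total x y : x != y -> lt x y \/ lt y x.
Proof. by case: lt_order => _ _ tot /tot /orP. Qed.

Lemma olt_trans (a b c : option T) : olt lt a b -> olt lt b c -> olt lt a c.
Proof. by case: a; case: b; case: c => //= z y x; apply: lt_trans. Qed.

Lemma ole_trans (a b c : option T) : ole lt a b -> ole lt b c -> ole lt a c.
Proof.
move=> [->|hab] [<-|hbc]; [by left|by right|by right|].
by right; apply: olt_trans hab hbc.
Qed.

Lemma is_lead_uniq c a b : is_lead lt c a -> is_lead lt c b -> a = b.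
Proof.
move=> [ha Ha] [hb Hb]; apply/eqP; apply: contraT => nab.
have hab := Hb a ha nab; have hba : lt b a by apply: (Ha b hb); rewrite eq_sym.
by move: (lt_trans hab hba); rewrite lt_irr.
Qed.

Lemma leadP c :
  (lead lt c = None /\ forall a, ~ is_lead lt c a) \/
  exists a, lead lt c = Some a /\ is_lead lt c a.
Proof.
rewrite /lead; case: excluded_middle_informative => [H|H].
  right; exists (proj1_sig (constructive_indefinite_description _ H)).
  by split => //; apply: proj2_sig.
by left; split => // a ha; apply: H; exists a.
Qed.

Lemma lead_Some c a : is_lead lt c a -> lead lt c = Some a.
Proof.
move=> ha; case: (leadP c) => [[_ H]|[b [-> hb]]]; first by case: (H a).
by rewrite (is_lead_uniq hb ha).
Qed.

Lemma lead_SomeE c a : lead lt c = Some a -> is_lead lt c a.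
Proof. by case: (leadP c) => [[-> _]|[b [-> hb]]] // [<-]. Qed.

Lemma lead_zero c : (forall a, c a = 0) -> lead lt c = None.
Proof.
move=> c0; case: (leadP c) => [[-> //]|[a [_ [ha _]]]].
by move: ha; rewrite c0 eqxx.
Qed.

Lemma lead_ext c c' : c =1 c' -> lead lt c = lead lt c'.
Proof.
have lead_ext1 (d d' : T -> K) a : d =1 d' -> is_lead lt d a -> is_lead lt d' a.
  by move=> E [ha Ha]; split=> [|b]; rewrite -!E //; apply: Ha.
move=> E; case: (leadP c) => [[-> H]|[a [-> ha]]].
  case: (leadP c') => [[-> //]|[a [_ ha]]].
  by case: (H a); apply: lead_ext1 ha => x; rewrite E.
by rewrite (lead_Some (lead_ext1 c c' a E ha)).
Qed.

Lemma lead_below c a : (forall y, c y != 0 -> lt y a) -> olt lt (lead lt c) (Some a).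
Proof. by move=> H; case: (leadP c) => [[-> _]|[b [-> [hb _]]]] //=; apply: H. Qed.

Lemma seq_max (s : seq T) : s != [::] ->
  exists x, x \in s /\ forall y, y \in s -> y != x -> lt y x.
Proof.
elim: s => // y s IH _; case: (altP (s =P [::])) => [->|ne].
  by exists y; rewrite mem_seq1; split => // z; rewrite mem_seq1 => ->.
have [x [xs Hx]] := IH ne.
have [xy|nxy] := boolP (lt x y).
- exists y; split; first exact: mem_head.
  move=> z; rewrite inE => /orP [/eqP ->|zs]; first by rewrite eqxx.
  move=> _; case: (altP (z =P x)) => [-> //|nzx].
  exact: (lt_trans (Hx z zs nzx) xy).
- exists x; split; first by rewrite inE xs orbT.
  move=> z; rewrite inE => /orP [/eqP -> nyx|zs]; last exact: (Hx z zs).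
  by case: (lt_total nyx) => // hxy; rewrite hxy in nxy.
Qed.

Lemma lead_exists c a0 : fsup c -> c a0 != 0 -> exists a, is_lead lt c a.
Proof.
move=> [s Hs] h0.
have ne : [seq a <- s | c a != 0] != [::].
  apply/eqP => e; have : a0 \in [seq a <- s | c a != 0] by rewrite mem_filter h0 Hs.
  by rewrite e.
have [x [xs Hx]] := seq_max ne; move: xs; rewrite mem_filter => /andP [hx _].
by exists x; split => // b hb nbx; apply: Hx nbx; rewrite mem_filter hb Hs.
Qed.

Lemma support_below c a : fsup c -> olt lt (lead lt c) (Some a) ->
  forall y, c y != 0 -> lt y a.
Proof.
move=> fs; case: (leadP c) => [[-> H] _ y hy|[b [-> [_ Hb]]] /= hba y hy].
  by have [b hb] := lead_exists fs hy; case: (H b).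
by case: (altP (y =P b)) => [->//|nyb]; apply: lt_trans (Hb y hy nyb) hba.
Qed.

Lemma lead_map c c' (f : T -> T) :
  {homo f : x y / lt x y} -> (forall x, c' (f x) = c x) ->
  (forall y, c' y != 0 -> exists x, y = f x) -> lead lt c' = omap f (lead lt c).
Proof.
move=> mono Ec Ef.
have inj : injective f.
  by move=> x y e; apply/eqP; apply: contraT => /lt_total [] /mono; rewrite e lt_irr.
case: (leadP c) => [[-> H]|[a [-> [ha Ha]]]] /=.
  case: (leadP c') => [[-> //]|[b [_ [hb Hb]]]].
  have [a eb] := Ef _ hb; subst b; case: (H a); split; first by rewrite -Ec.
  move=> x hx nxa; case: (lt_total nxa) => // hax.
  have := Hb (f x); rewrite Ec (inj_eq inj) nxa => /(_ hx isT) hfx.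
  by move: (lt_trans hfx (mono _ _ hax)); rewrite lt_irr.
apply: lead_Some; split; first by rewrite Ec.
move=> y hy; have [x exy] := Ef _ hy; subst y; rewrite (inj_eq inj) => nxa.
by apply: (mono x a); apply: (Ha x) nxa; rewrite -Ec.
Qed.

Lemma lead_sub_lower (k : K) c1 c2 a : lead lt c1 = Some a ->
  (forall y, c2 y != 0 -> lt y a) -> lead lt (fun y => c1 y - k * c2 y) = Some a.
Proof.
move=> /lead_SomeE [h1 H1] H2.
have c2a : c2 a = 0 by apply/eqP; apply: contraT => /H2; rewrite lt_irr.
apply: lead_Some; split; first by rewrite c2a mulr0 subr0.
move=> y hy nya; case: (boolP (c1 y == 0)) => [/eqP c1y|hc1]; last exact: H1 hc1 nya.
by apply: H2; apply: contraNneq hy => ->; rewrite c1y mulr0 subrr.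
Qed.

Lemma lead_sub_cancel (k : K) c1 c2 a : lead lt c1 = Some a -> lead lt c2 = Some a ->
  c1 a = k * c2 a -> olt lt (lead lt (fun y => c1 y - k * c2 y)) (Some a).
Proof.
move=> /lead_SomeE [_ H1] /lead_SomeE [_ H2] Ea; apply: lead_below => y.
case: (altP (y =P a)) => [->|nya]; first by rewrite Ea subrr eqxx.
case: (boolP (c1 y == 0)) => [/eqP ->|hc1 _]; last exact: H1 hc1 nya.
move=> hy; apply: H2 _ nya.
by apply: contraNneq hy => ->; rewrite mulr0 subrr.
Qed.

End LeadingTerms.

Section PowerProducts.
Variable n : nat.
Implicit Types a b t x : mon n.

Lemma mdvdP a b : reflect (forall i, (a i <= b i)%N) (mdvd a b).
Proof. exact: forallP. Qed.

Lemma mon_ext a b : (forall i, a i = b i) -> a = b.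
Proof. by move=> h; apply/ffunP. Qed.

Lemma mdvd_mmul t x : mdvd t (mmul t x).
Proof. by apply/mdvdP => i; rewrite ffunE; lia. Qed.

Lemma mquo_mmul t x : mquo (mmul t x) t = x.
Proof. by apply: mon_ext => i; rewrite !ffunE; lia. Qed.

Lemma mmul_quo t a : mdvd t a -> mmul t (mquo a t) = a.
Proof. by move/mdvdP => h; apply: mon_ext => i; rewrite !ffunE; have := h i; lia. Qed.

Lemma mmul_quo_r b a : mdvd b a -> mmul (mquo a b) b = a.
Proof. by move/mdvdP => h; apply: mon_ext => i; rewrite !ffunE; have := h i; lia. Qed.

Lemma mmul1 a : mmul (mone n) a = a.
Proof. by apply: mon_ext => i; rewrite !ffunE. Qed.

Lemma mlcmC a b : mlcm a b = mlcm b a.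
Proof. by apply: mon_ext => i; rewrite !ffunE maxnC. Qed.

Lemma mmul_lcm a b : mmul (mquo (mlcm a b) a) a = mlcm a b.
Proof. by apply: mon_ext => i; rewrite !ffunE; lia. Qed.

Lemma lcm_multiple_cofactors t x :
  mquo (mlcm x (mmul t x)) x = t /\ mquo (mlcm x (mmul t x)) (mmul t x) = mone n.
Proof. by split; apply: mon_ext => i; rewrite !ffunE; lia. Qed.

Lemma lcm_cofactors_scale t x a' b b' bk : mdvd a' (mmul t x) -> mdvd b' b ->
  mquo (mmul t x) a' = mquo b b' ->
  let s := mquo (mmul t x) (mlcm x a') in
  mmul s (mmul (mquo (mlcm x a') a') b') = b /\
  mmul s (mmul (mquo (mlcm x a') x) bk) = mmul t bk.
Proof.
move=> /mdvdP h1 /mdvdP h2 E s; split; apply: mon_ext => i; rewrite !ffunE;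
  have := h1 i; have := h2 i; have := congr1 (fun f : mon n => f i) E;
  rewrite !ffunE /=; lia.
Qed.

Lemma term_order_cancel (lt : rel (mon n)) t a b : term_order lt ->
  lt (mmul t a) (mmul t b) -> lt a b.
Proof.
move=> [st mono _] h; case: (altP (a =P b)) => [e|nab].
  by move: h; rewrite e lt_irr.
case: (lt_total st nab) => // hba.
by move: (lt_trans st h (mono _ _ t hba)); rewrite lt_irr.
Qed.

End PowerProducts.

Section MonomialMultiples.
Variables (K : fieldType) (n m : nat) (lt : rel (mon n)) (ltM : rel ('I_m * mon n)).

Lemma pmulmE c t (p : mpoly K n) a : pmulm c t p a = c * pmulm 1 t p a.
Proof. by rewrite /pmulm; case: ifP; rewrite ?mul1r ?mulr0. Qed.

Lemma pmulm_at c t (p : mpoly K n) b : pmulm c t p (mmul t b) = c * p b.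
Proof. by rewrite /pmulm mdvd_mmul mquo_mmul. Qed.

Lemma lpp_ext (p q : mpoly K n) : term_order lt -> p =1 q -> lpp lt p = lpp lt q.
Proof. by move=> [st _ _]; apply: lead_ext. Qed.

Lemma lpp_pmulm t (p : mpoly K n) : term_order lt ->
  lpp lt (pmulm 1 t p) = omap (mmul t) (lpp lt p).
Proof.
move=> [st mono _]; apply: lead_map => // [x y|x|y]; first exact: mono.
  by rewrite pmulm_at mul1r.
rewrite /pmulm; case: ifP => [dvd _|]; last by rewrite eqxx.
by exists (mquo y t); rewrite mmul_quo.
Qed.

Lemma vlpp_vmulm t (u : mvec K n m) : mod_term_order ltM ->
  vlpp ltM (vmulm 1 t u) = omap (tmul t) (vlpp ltM u).
Proof.
move=> [st mono _]; apply: lead_map => // [x y|x|[i y]]; first exact: mono.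
  by rewrite /vmulm pmulm_at mul1r.
rewrite /vmulm /pmulm /=; case: ifP => [dvd _|]; last by rewrite eqxx.
by exists (i, mquo y t); rewrite /tmul mmul_quo.
Qed.

End MonomialMultiples.

Section FiniteSupport.
Variables (K : fieldType) (n m : nat).

Definition vfs (u : mvec K n m) : Prop := fsup (fun y : 'I_m * mon n => u y.1 y.2).
Definition fin_elt (x : elt K n m) : Prop := fsup x.2 /\ vfs x.1.
Definition fin_all (G : seq (elt K n m)) : Prop := forall x, List.In x G -> fin_elt x.

Lemma fsup0 (T : eqType) : fsup (fun _ : T => 0 : K).
Proof. by exists [::] => a; rewrite eqxx. Qed.

Lemma fsup_sub (T : eqType) (c1 c2 : T -> K) :
  fsup c1 -> fsup c2 -> fsup (fun a => c1 a - c2 a).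
Proof.
move=> [s1 H1] [s2 H2]; exists (s1 ++ s2) => a; rewrite mem_cat.
case: (boolP (c1 a == 0)) => [/eqP ->|/H1 -> //].
by rewrite sub0r oppr_eq0 => /H2 ->; rewrite orbT.
Qed.

Lemma fsup_img (T T' : eqType) (c : T -> K) (c' : T' -> K) (f : T -> T') :
  fsup c -> (forall y, c' y != 0 -> exists x, c x != 0 /\ y = f x) -> fsup c'.
Proof. by move=> [s H] Hf; exists (map f s) => y /Hf [x [hx ->]]; apply/map_f/H. Qed.

Lemma fsup_pone : fsup (@pone K n).
Proof. by exists [:: mone n] => a; rewrite /pone; case: ifP => [/eqP ->|]; rewrite ?eqxx ?inE. Qed.

Lemma fsup_pmulm c t (p : mpoly K n) : fsup p -> fsup (pmulm c t p).
Proof.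
move=> fp; apply: (fsup_img (f := mmul t) fp) => y; rewrite /pmulm.
case: ifP => [dvd hy|]; last by rewrite eqxx.
exists (mquo y t); rewrite mmul_quo //; split => //.
by apply: contraNneq hy => ->; rewrite mulr0.
Qed.

Lemma fsup_vmulm c t (u : mvec K n m) : vfs u -> vfs (vmulm c t u).
Proof.
move=> fu; apply: (fsup_img (f := tmul t) fu) => -[i y]; rewrite /vmulm /pmulm /=.
case: ifP => [dvd hy|]; last by rewrite eqxx.
exists (i, mquo y t); rewrite /tmul /= mmul_quo //; split => //.
by apply: contraNneq hy => ->; rewrite mulr0.
Qed.

Lemma fsup_vsingle i (p : mpoly K n) : fsup p -> vfs (vsingle i p).
Proof.
move=> fp; apply: (fsup_img (f := pair i) fp) => -[k y]; rewrite /vsingle /=.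
by case: ifP => [/eqP -> hy|]; [exists y|rewrite eqxx].
Qed.

Lemma pmul_nz (p q : mpoly K n) a : pmul p q a != 0 ->
  exists d, [/\ p d != 0, q (mquo a d) != 0 & mdvd d a].
Proof.
rewrite /pmul; have : {subset divs a <= [pred d | mdvd d a]}.
  by move=> d; rewrite mem_filter => /andP [].
elim: (divs a) => [|d s IH] Hd; first by rewrite big_nil eqxx.
rewrite big_cons; case: (boolP (p d * q (mquo a d) == 0)) => [/eqP ->|hd _].
  by rewrite add0r; apply: IH => e he; apply: Hd; rewrite inE he orbT.
exists d; split; last by apply: Hd; rewrite inE eqxx.
  by apply: contraNneq hd => ->; rewrite mul0r.
by apply: contraNneq hd => ->; rewrite mulr0.
Qed.

Lemma fsup_vmulp (p : mpoly K n) (w : mvec K n m) : fsup p -> vfs w -> vfs (vmulp p w).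
Proof.
move=> [s1 H1] [s2 H2]; exists [seq (y.1, mmul x y.2) | x <- s1, y <- s2].
move=> -[i a] /= /pmul_nz [d [hd hq dvd]]; rewrite -(mmul_quo dvd).
apply: (allpairs_f (fun x (y : 'I_m * mon n) => (y.1, mmul x y.2)) (y := (i, mquo a d))).
  exact: H1.
exact: H2.
Qed.

Lemma fin_Gat G j : fin_all G -> fin_elt (Gat G j).
Proof.
rewrite /Gat; elim: G j => [|x G IH] [|j] /= H; try by split; apply: fsup0.
  by apply: H; left.
by apply: IH => y hy; apply: H; right.
Qed.

Lemma fin_all_cat (G1 G2 : seq (elt K n m)) :
  fin_all G1 -> fin_all G2 -> fin_all (G1 ++ G2).
Proof. by move=> h1 h2 x hx; case: (List.in_app_or _ _ _ hx) => [/h1|/h2]. Qed.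

Lemma In_map_inv (A B : Type) (f : A -> B) (s : seq A) y :
  List.In y (map f s) -> exists x, y = f x.
Proof. by move/List.in_map_iff => [x [<- _]]; exists x. Qed.

End FiniteSupport.

Section Reduction.
Variables (K : fieldType) (n m : nat) (lt : rel (mon n)) (ltM : rel ('I_m * mon n)).
Hypothesis lt_term : term_order lt.

Lemma redstep_vlpp (B : seq (elt K n m)) x y :
  redstep lt ltM B x y -> vlpp ltM y.1 = vlpp ltM x.1.
Proof. by move=> [j [a [b [_ [E ->]]]]]. Qed.

Lemma reduces_vlpp (B : seq (elt K n m)) x y :
  reduces lt ltM B x y -> vlpp ltM y.1 = vlpp ltM x.1.
Proof. by elim=> // x0 y0 z0 /redstep_vlpp E _ ->. Qed.

Lemma redstep_lpp (B : seq (elt K n m)) x y :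
  redstep lt ltM B x y -> olt lt (lpp lt y.2) (lpp lt x.2).
Proof.
move=> [j [a [b [[_ _ ha hb dba] [_ ->]]]]] /=; rewrite ha.
set g := (Gat B j).2; set c := lc lt x.2 / lc lt g.
have hga : lpp lt (pmulm 1 (mquo a b) g) = Some a by rewrite lpp_pmulm // hb /= mmul_quo_r.
have ga : pmulm 1 (mquo a b) g a = g b by rewrite -{2}(mmul_quo_r dba) pmulm_at mul1r.
have [gb0 _] := lead_SomeE hb.
have E : psub x.2 (pmulm c (mquo a b) g) =1
    fun z => x.2 z - c * pmulm 1 (mquo a b) g z by move=> z; rewrite /psub pmulmE.
rewrite (lpp_ext lt_term E); apply: lead_sub_cancel => //.
by rewrite ga /c /lc ha hb divfK.
Qed.

Lemma reduces_lpp (B : seq (elt K n m)) x y :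
  reduces lt ltM B x y -> ole lt (lpp lt y.2) (lpp lt x.2).
Proof.
have [st _ _] := lt_term.
elim=> [x0 _|x0 y0 z0 /redstep_lpp h _ IH]; first by left.
by apply: (ole_trans st IH); right.
Qed.

Lemma reduces_strict (B : seq (elt K n m)) x y : (exists z, redstep lt ltM B x z) ->
  reduces lt ltM B x y -> olt lt (lpp lt y.2) (lpp lt x.2).
Proof.
have [st _ _] := lt_term.
move=> [z hz] R; case: R hz => [x0 H hz|x0 y0 z0 step R _]; first by case: (H z).
have h := redstep_lpp step; case: (reduces_lpp R) => [->//|h'].
exact: (olt_trans st h' h).
Qed.

End Reduction.

Section SPolynomials.
Variables (K : fieldType) (n m : nat) (lt : rel (mon n)) (ltM : rel ('I_m * mon n)).
Hypothesis lt_term : term_order lt.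
Hypothesis ltM_term : mod_term_order ltM.

Lemma spoly_lpp (G : seq (elt K n m)) k l :
  ole lt (lpp lt (spoly lt G k l).2) (lpp lt (pmulm 1 (cpt lt G k l) (Gat G k).2)).
Proof.
set f := (Gat G k).2; set g := (Gat G l).2; set c := lc lt f / lc lt g.
have E : (spoly lt G k l).2 =1
    fun y => pmulm 1 (cpt lt G k l) f y - c * pmulm 1 (cpt lt G l k) g y.
  by move=> y; rewrite /spoly /psub /= [pmulm c _ _ _]pmulmE.
rewrite (lpp_ext lt_term E).
(* If f or g has no leading term then c = 0 and nothing is subtracted. *)
case hf: (lpp lt f) => [af|]; case hg: (lpp lt g) => [ag|]; last 3 first.
  1-3: by left; apply: lpp_ext => // y; rewrite /c /lc hf hg ?invr0 ?mulr0 ?mul0r subr0.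
have hP : lpp lt (pmulm 1 (cpt lt G k l) f) = Some (mlcm af ag).
  by rewrite lpp_pmulm // hf /= /cpt /lppd -/f -/g hf hg /= mmul_lcm.
have hQ : lpp lt (pmulm 1 (cpt lt G l k) g) = Some (mlcm af ag).
  by rewrite lpp_pmulm // hg /= /cpt /lppd -/f -/g hf hg /= mmul_lcm mlcmC.
have Pc : pmulm 1 (cpt lt G k l) f (mlcm af ag) = f af.
  by rewrite /cpt /lppd -/f -/g hf hg /= -{2}(mmul_lcm af ag) pmulm_at mul1r.
have Qc : pmulm 1 (cpt lt G l k) g (mlcm af ag) = g ag.
  by rewrite /cpt /lppd -/f -/g hf hg /= [mlcm af ag]mlcmC -{2}(mmul_lcm ag af) pmulm_at mul1r.
have [gb0 _] := lead_SomeE hg.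
right; rewrite hP; apply: lead_sub_cancel => //.
by rewrite Pc Qc /c /lc hf hg divfK.
Qed.

Lemma spoly_signature (G : seq (elt K n m)) k l : vfs (Gat G l).1 ->
  cp_regular lt ltM G k l -> vlpp ltM (spoly lt G k l).1 = cpsig lt ltM G k l.
Proof.
have [st _ _] := ltM_term.
rewrite /cp_regular => fin; case hs: (cpsig lt ltM G k l) => [sg|]; last first.
  by case: (cpsig lt ltM G l k).
move=> reg; set c := lc lt (Gat G k).2 / lc lt (Gat G l).2.
have E : (fun y : 'I_m * mon n => (spoly lt G k l).1 y.1 y.2) =1
    fun y => vmulm 1 (cpt lt G k l) (Gat G k).1 y.1 y.2
             - c * vmulm 1 (cpt lt G l k) (Gat G l).1 y.1 y.2.
  by move=> y; rewrite /spoly /vsub /psub /vmulm /= [pmulm c _ _ _]pmulmE.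
rewrite /vlpp (lead_ext st E); apply: lead_sub_lower => //.
exact: (support_below st (fsup_vmulm 1 (cpt lt G l k) fin) reg).
Qed.

End SPolynomials.

Section Invariant.
Variables (K : fieldType) (n m : nat) (lt : rel (mon n)) (ltM : rel ('I_m * mon n)).
Variable F : 'I_m -> mpoly K n.
Hypothesis F_fin : forall i, finsupp (F i).

Lemma fin_spoly (G : seq (elt K n m)) k l : fin_all G -> fin_elt (spoly lt G k l).
Proof.
move=> fin; have [fk vk] := fin_Gat k fin; have [fl vl] := fin_Gat l fin.
by split; apply: fsup_sub;
  [apply: fsup_pmulm|apply: fsup_pmulm|apply: fsup_vmulm|apply: fsup_vmulm].
Qed.

Lemma fin_reduces (G : seq (elt K n m)) x y : fin_all G -> fin_elt x ->
  reduces lt ltM G x y -> fin_elt y.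
Proof.
move=> fin fx R; elim: R fx => // x0 y0 z0 [j [a [b [_ [_ ->]]]]] _ IH [f0 v0].
have [fj vj] := fin_Gat j fin.
by apply: IH; split; apply: fsup_sub => //; [apply: fsup_pmulm|apply: fsup_vmulm].
Qed.

Lemma fin_new_syz (w : mvec K n m) h : fin_elt (w, h) -> fin_all (new_syz F w h).
Proof.
move=> [fh vw] x hx; have [i ->] := In_map_inv hx; split; first exact: fsup0.
by apply: fsup_sub; [apply: fsup_vsingle fh|apply: fsup_vmulp (F_fin i) vw].
Qed.

Lemma fin_reachable G CP : reachable lt ltM F G CP -> fin_all G.
Proof.
have fin_perm (s l : seq (elt K n m)) : Permutation s l -> fin_all l -> fin_all s.
  by move=> P fl x hx; apply/fl/(Permutation_in _ P).
have fin_last (G' : seq (elt K n m)) x : fin_all G' -> fin_elt x -> fin_all (G' ++ [:: x]).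
  by move=> fG fx; apply: fin_all_cat => // y [<-|].
elim=> {G CP} [s P|//|G CP p w h _ fin _ kl _ _ R _|G CP p w h s _ fin _ kl _ _ R _ P G'].
- apply: fin_all_cat => [x hx|].
    by have [i ->] := In_map_inv hx; split; [apply: F_fin|apply/fsup_vsingle/fsup_pone].
  apply: (fin_perm _ _ P) => x hx; have [ij ->] := In_map_inv hx; split; first exact: fsup0.
  by apply: fsup_sub; apply: fsup_vsingle; apply: F_fin.
- exact: fin_last (fin_reduces fin (fin_spoly _ _ fin) R).
- have fwh := fin_reduces fin (fin_spoly _ _ fin) R.
  rewrite /G' catA; apply: (fin_last _ _ _ fwh).
  exact: fin_all_cat fin (fin_perm _ _ P (fin_new_syz fwh)).
Qed.

End Invariant.

Section Theorems.
Variables (K : fieldType) (n m : nat) (lt : rel (mon n)) (ltM : rel ('I_m * mon n)).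
Hypothesis lt_term : term_order lt.
Hypothesis ltM_term : mod_term_order ltM.

Lemma admissible (G : seq (elt K n m)) k l s w h : fin_all G ->
  cp_regular lt ltM G k l -> reduces lt ltM G (spoly lt G k l) (w, h) ->
  let G' := G ++ s ++ [:: (w, h)] in gbrel lt ltM G' (size G' - 1) k.
Proof.
have [st _ _] := lt_term.
move=> fin reg red G'.
have hw : vlpp ltM w = cpsig lt ltM G k l.
  by rewrite -(spoly_signature ltM_term (fin_Gat l fin).2 reg) -(reduces_vlpp red).
have sig_k : cpsig lt ltM G k l = omap (tmul (cpt lt G k l)) (vlpp ltM (Gat G k).1).
  exact: vlpp_vmulm.
move: reg hw; rewrite /cp_regular sig_k.
case hx: (vlpp ltM (Gat G k).1) => [x|] /=; last by case: (cpsig lt ltM G l k).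
move=> _ hw; set tf := cpt lt G k l.
have hk : (k < size G)%N.
  rewrite ltnNge; apply/negP => hge; move: hx.
  by rewrite /Gat nth_default // /vlpp lead_zero.
have lastG' : Gat G' (size G' - 1) = (w, h).
  by rewrite /G' catA /Gat size_cat /= addn1 subn1 nth_cat ltnn subnn.
have kG' : Gat G' k = Gat G k by rewrite /G' /Gat nth_cat hk.
have [cof_x cof_tx] := lcm_multiple_cofactors tf x.2.
rewrite /gbrel lastG' kG' hw hx /= cof_x cof_tx.
have -> : lpp lt (pmulm 1 (mone n) h) = lpp lt h.
  by rewrite lpp_pmulm //; case: (lpp lt h) => //= b; rewrite mmul1.
(* lpp(h) <= lpp(S-polynomial) <= lpp(t_f f); equality means (w,h) is later. *)
have := ole_trans st (reduces_lpp lt_term red) (spoly_lpp lt_term G k l).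
case=> /= [->|]; last by left.
by right; split => //; rewrite /G' !size_cat /=; lia.
Qed.

(* Part (ii): if t(u,f) reduces, in at least one step, to an element that is
   super top-reducible by some G_j, then t(u,f) is gen-rewritable by G_j. *)
Lemma super_top_genrew (G : seq (elt K n m)) k t w h j a a' b b' :
  (k < size G)%N -> (j < size G)%N ->
  let tx := (vmulm 1 t (Gat G k).1, pmulm 1 t (Gat G k).2) in
  (exists z, redstep lt ltM G tx z) -> reduces lt ltM G tx (w, h) ->
  vlpp ltM w = Some a -> vlpp ltM (Gat G j).1 = Some a' ->
  lpp lt h = Some b -> lpp lt (Gat G j).2 = Some b' ->
  tdvd a' a -> mdvd b' b -> mquo a.2 a'.2 = mquo b b' ->
  genrew lt ltM G t k.
Proof.
move=> hk hj tx step red ea ea' eb eb' dvd_a db eq.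
have hlt := reduces_strict lt_term step red; rewrite /= eb lpp_pmulm // in hlt.
case hbk: (lpp lt (Gat G k).2) hlt => [bk|] //= hlt.
have hv := reduces_vlpp red; rewrite /= vlpp_vmulm // ea in hv.
case hx: (vlpp ltM (Gat G k).1) hv => [x|] //= [ax]; subst a.
split => //; exists j; split => //; first by rewrite ea' vlpp_vmulm // hx.
rewrite /gbrel ea' hx /=; left; rewrite !lpp_pmulm // eb' hbk /=.
have [_ da] := andP dvd_a.
have [scale_b' scale_bk] := lcm_cofactors_scale bk da db eq.
apply: (term_order_cancel (t := mquo (mmul t x.2) (mlcm x.2 a'.2))) => //.
by rewrite scale_b' scale_bk.
Qed.

End Theorems.

Unset Implicit Arguments.
Theorem mainTheorem5 (K : fieldType) (n m : nat)
  (lt : rel (mon n)) (ltM : rel ('I_m * mon n))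
  (F : 'I_m -> (mon n -> K)) :
  term_order lt -> mod_term_order ltM ->
  (forall i, finsupp (F i)) ->
  forall (G : seq (elt K n m)) (CP : seq (nat * nat)),
  reachable lt ltM F G CP ->
  (* (i) admissibility *)
  (forall (p : nat) (w : mvec K n m) (h : mpoly K n) (s : seq (elt K n m)),
     (p < size CP)%N ->
     let kl := nth (0%N, 0%N) CP p in
     cp_regular lt ltM G kl.1 kl.2 -> ~ cp_genrew lt ltM G kl.1 kl.2 ->
     reduces lt ltM G (spoly lt G kl.1 kl.2) (w, h) ->
     (if pnz h then Permutation s (new_syz F w h) else s = [::]) ->
     let G' := G ++ s ++ [:: (w, h)] in
     gbrel lt ltM G' (size G' - 1) kl.1)
  /\
  (* (ii) eventually super top-reducible implies gen-rewritable *)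
  (forall (k : nat) (t : mon n) (w : mvec K n m) (h : mpoly K n),
     (k < size G)%N -> pnz (Gat G k).2 ->
     let tx := (vmulm 1 t (Gat G k).1, pmulm 1 t (Gat G k).2) in
     (exists z, redstep lt ltM G tx z) ->
     reduces lt ltM G tx (w, h) ->
     (exists j, (j < size G)%N /\
        exists a a' b b',
        [/\ vlpp ltM w = Some a, vlpp ltM (Gat G j).1 = Some a',
            lpp lt h = Some b & lpp lt (Gat G j).2 = Some b'] /\
        [/\ tdvd a' a, mdvd b' b, mquo a.2 a'.2 = mquo b b'
          & vlc ltM w / vlc ltM (Gat G j).1 = lc lt h / lc lt (Gat G j).2]) ->
     genrew lt ltM G t k).
Proof.
move=> lt_term ltM_term F_fin G CP R; have fin := fin_reachable F_fin R.
split.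
  move=> p w h s _ kl reg _ red _.
  exact: (admissible lt_term ltM_term s fin reg red).
move=> k t w h hk _ tx step red [j [hj [a [a' [b [b' [[ea ea' eb eb'] [da db eq _]]]]]]]].
exact: (super_top_genrew lt_term ltM_term hk hj step red ea ea' eb eb' da db eq).
Qed.
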